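(* Let $k>0$ and $g(u;a)=u(1-u)(u-a)$. Define $$a_*^+(k)=\frac{\sqrt{4k+k^2}-k}{2},\qquad a_1^+(k)=\min\Big\{\frac{2\sqrt k}{2+\sqrt k},1\Big\},$$ and for $a_*^+(k)\le a\le 1$, $$d^+_{\min}(a,k)=\frac{2a^2+a(k-4)+4-k-2(2-a)\sqrt{a^2+ka-k}}{(4+k)^2},$$ $$d^+_{\max}(a,k)=\begin{cases}\dfrac{a^2}{4k}, & a\in(a_1^+(k),1],\\[2mm]\dfrac{2a^2+a(k-4)+4-k+2(2-a)\sqrt{a^2+ka-k}}{(4+k)^2}, & a\in[a_*^+(k),a_1^+(k)].\end{cases}$$ Then: (i) $d^+_{\min},d^+_{\max}\in C([a_*^+(k),1]\times(0,\infty);\mathbb R)$ and $0\le d^+_{\min}(a,k)\le d^+_{\max}(a,k)\le d^+(a,k)$ for all $a\in[a_*^+(k),1]$, where $d^+(a,k)=\max_{y\in(1-a,1)}\frac{-g(1-y;a)}{ky}$; (ii) $d^+_{\max}(a_*^+(k),k)=d^+_{\min}(a_*^+(k),k)$; (iii) $$\mathcal D^+(k)=\{(a,d)\in\mathcal H:\ a>a_*^+(k),\ d^+_{\min}(a,k)<d<d^+_{\max}(a,k)\}.$$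
   Context: Let $\mathcal H=(0,1)\times(0,\infty)$. For a nonlinearity $f(u;a)$, $K>0$, $a,A\in(0,1)$ let $d^\diamond_{f,K}(A;a)=\inf\{d>0:\ d(K+1)(A-v)-f(A;a)\ge -f(v;a)\ \forall v\in[0,A]\}$ and $\mathcal D^-_f(K)=\{(a,d)\in\mathcal H:\ d^\diamond_{f,K}(A;a)<d<f(A;a)/A$ for some $A\in(a,1)\}$. With $\tilde g(v;b):=-g(1-v;1-b)$ (for the cubic, $\tilde g=g$), define $\mathcal D^+(k)=\{(a,d)\in\mathcal H:\ (1-a,dk)\in\mathcal D^-_{\tilde g}(1/k)\}$. *)

From HB Require Import structures.
From mathcomp Require Import all_boot all_order all_algebra.
From mathcomp Require Import all_classical all_reals all_analysis.
Set Implicit Arguments. Unset Strict Implicit. Unset Printing Implicit Defensive.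
Import Order.TTheory GRing.Theory Num.Theory.
Import numFieldNormedType.Exports.
Local Open Scope classical_set_scope.
Local Open Scope ring_scope.

Section Defs.
Variable R : realType.

Definition g (u a : R) : R := u * (1 - u) * (u - a).

Definition gtilde (v b : R) : R := - g (1 - v) (1 - b).

Definition Hset : set (R * R) := [set p | 0 < p.1 < 1 /\ 0 < p.2].

Definition ddiamond (f : R -> R -> R) (K A a : R) : R :=
  inf [set d : R | 0 < d /\
        forall v : R, 0 <= v <= A -> d * (K + 1) * (A - v) - f A a >= - f v a].

Definition Dminus (f : R -> R -> R) (K : R) : set (R * R) :=
  [set p | Hset p /\ exists A : R, p.1 < A < 1 /\
           ddiamond f K A p.1 < p.2 < f A p.1 / A].

Definition Dplus (k : R) : set (R * R) :=
  [set p | Hset p /\ Dminus gtilde (1 / k) (1 - p.1, p.2 * k)].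

Definition astar (k : R) : R := (Num.sqrt (4 * k + k ^+ 2) - k) / 2.

Definition a1 (k : R) : R :=
  Num.min (2 * Num.sqrt k / (2 + Num.sqrt k)) 1.

Definition dmin (a k : R) : R :=
  (2 * a ^+ 2 + a * (k - 4) + 4 - k - 2 * (2 - a) * Num.sqrt (a ^+ 2 + k * a - k))
  / (4 + k) ^+ 2.

Definition dmax (a k : R) : R :=
  if a1 k < a then a ^+ 2 / (4 * k)
  else (2 * a ^+ 2 + a * (k - 4) + 4 - k + 2 * (2 - a) * Num.sqrt (a ^+ 2 + k * a - k))
       / (4 + k) ^+ 2.

(* d^+(a,k) = max_{y in (1-a,1)} -g(1-y;a)/(k y), written as the supremum
   of the set of values (the maximum is attained). *)
Definition dplus (a k : R) : R :=
  sup [set - g (1 - y) a / (k * y) | y in `]1 - a, 1[].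

Definition adom : set (R * R) :=
  [set p | 0 < p.2 /\ astar p.2 <= p.1 <= 1].

End Defs.

(* Put A = 1 - a + x. Then g~(A; 1-a) / A = x (a - x), and the slope of g~(.; 1-a)
   between v and A is x (a - x) + v (1 - x) - v^2, so (a, d) lies in D^+(k) iff some
   x in (0, a) has d k < x (a - x) and all these slopes for v in [0, A) stay below
   d (1 + k), with a uniform margin because ddiamond is an infimum.
   Writing x = 1 - 2 w, the slopes peak at v = w and the two conditions become
   dlow w < d < dhigh w; the gap dhigh w - dlow w has the sign of -phi w, where
   phi w = k w^2 - x (a - x) has the roots
   v_-, v_+ = (2 - a -+ sqrt (a^2 + k a - k)) / (k + 4).
   Hence d_min = v_-^2, and d_max is the largest value of x (a - x) / k over
   x >= 1 - 2 v_+. Necessity of d_min < d < d_max only uses the slopes at the test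
   points v_- and v_+; sufficiency follows from the intermediate value theorem
   applied to dlow + dhigh on [v_-, v_+]. *)

From HB Require Import structures.
From mathcomp Require Import all_boot all_order all_algebra.
From mathcomp Require Import all_classical all_reals all_analysis.
From mathcomp Require Import ring lra.
Set Implicit Arguments. Unset Strict Implicit. Unset Printing Implicit Defensive.
Import Order.TTheory GRing.Theory Num.Theory.
Import numFieldNormedType.Exports.
Local Open Scope classical_set_scope.
Local Open Scope ring_scope.

(* The library lemmas are stated for [f + g], [f \* g], ... in the function algebra;
   passing the matched functions explicitly keeps unification first-order and fast. *)
Ltac continuity_step := try unfold prop_for; lazymatch goal with
  | |- continuous_at _ (fun q => @?f q + @?g q) =>
      apply: (continuousD (f := f) (g := g))
  | |- continuous_at _ (fun q => @?f q * @?g q) =>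
      apply: (continuousM (s := f) (t := g))
  | |- continuous_at _ (fun q => - @?f q) => apply: (continuousN (f := f))
  | |- continuous_at _ (fun q => (@?f q)^-1) => apply: (continuousV (s := f))
  | |- continuous_at _ (fun q => (@?f q) ^+ ?n) =>
      apply: (continuous_comp (f := f) (g := fun y => y ^+ n));
      last exact: exprn_continuous
  | |- continuous_at _ (fun q => Num.max (@?f q) (@?g q)) =>
      apply: (continuous_max (f := f) (g := g))
  | |- continuous_at _ (fun q => Num.sqrt (@?f q)) =>
      apply: (continuous_comp (f := f) (g := Num.sqrt)); last exact: sqrt_continuous
  | |- continuous_at _ (fun q => q.1) => exact: cvg_fst
  | |- continuous_at _ (fun q => q.2) => exact: cvg_snd
  | |- continuous_at _ (fun q => q) => exact: cvg_id
  | |- continuous_at _ (fun _ => _) => exact: cvg_cst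
  end.

Section Quadratics.
Variable R : realType.
Implicit Types a k s v w x y d : R.

Definition discr a k : R := a ^+ 2 + k * a - k.
Definition cap a x : R := x * (a - x).
Definition secant a x v : R := cap a x + v * (1 - x) - v ^+ 2.
Definition phi a k v : R := k * v ^+ 2 - cap a (1 - 2 * v).
Definition vminus a k : R := (2 - a - Num.sqrt (discr a k)) / (k + 4).
Definition vplus a k : R := (2 - a + Num.sqrt (discr a k)) / (k + 4).
Definition dlow a k w : R := (cap a (1 - 2 * w) + w ^+ 2) / (1 + k).
Definition dhigh a k w : R := cap a (1 - 2 * w) / k.

Variables a k : R.

Lemma cap_le_sqr x : cap a x <= a ^+ 2 / 4.
Proof. have := sqr_ge0 (a - 2 * x); rewrite /cap => ?; lra. Qed.

Lemma secant_le x v : secant a x v <= cap a x + (1 - x) ^+ 2 / 4.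
Proof. have := sqr_ge0 (1 - x - 2 * v); rewrite /secant => ?; lra. Qed.

Lemma cap_phi v : cap a (1 - 2 * v) = k * v ^+ 2 - phi a k v.
Proof. rewrite /phi; ring. Qed.

(* Expansions around x = 1 - 2 v, the point whose secant slopes peak at v. *)
Lemma cap_shift v y :
  cap a (1 - 2 * v + y) = k * v ^+ 2 - phi a k v + (a - 2 + 4 * v) * y - y ^+ 2.
Proof. rewrite /phi /cap; ring. Qed.

Lemma secant_shift v y : secant a (1 - 2 * v + y) v =
  (1 + k) * v ^+ 2 - phi a k v + (a - 2 + 3 * v) * y - y ^+ 2.
Proof. rewrite /secant /phi /cap; ring. Qed.

Lemma phi_vroot s : 0 < k ->
  phi a k ((2 - a + s) / (k + 4)) = (s ^+ 2 - discr a k) / (k + 4).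
Proof. move=> k0; rewrite /phi /cap /discr; field; lra. Qed.

Lemma phi_factor v : 0 < k -> 0 <= discr a k ->
  phi a k v = (k + 4) * (v - vminus a k) * (v - vplus a k).
Proof.
move=> k0 D0; rewrite /vminus /vplus; set s := Num.sqrt _.
have s2 : s ^+ 2 = discr a k by rewrite sqr_sqrtr.
have -> : (k + 4) * (v - (2 - a - s) / (k + 4)) * (v - (2 - a + s) / (k + 4)) =
  (k + 4) * v ^+ 2 - 2 * (2 - a) * v + ((2 - a) ^+ 2 - s ^+ 2) / (k + 4).
  by field; lra.
rewrite s2 /phi /cap /discr; field; lra.
Qed.

Lemma phi_vminus : 0 < k -> 0 <= discr a k -> phi a k (vminus a k) = 0.
Proof. by move=> k0 D0; rewrite phi_factor // subrr mulr0 mul0r. Qed.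

Lemma phi_vplus : 0 < k -> 0 <= discr a k -> phi a k (vplus a k) = 0.
Proof. by move=> k0 D0; rewrite phi_factor // subrr mulr0. Qed.

Lemma phi_root_sqr_le v : 0 < k -> phi a k v = 0 -> v ^+ 2 <= a ^+ 2 / (4 * k).
Proof.
move=> k0 phi0; have := cap_le_sqr (1 - 2 * v); rewrite cap_phi phi0 subr0 => h.
by rewrite ler_pdivlMr ?mulr_gt0 //; lra.
Qed.

Lemma discr_le_sqr : a <= 1 -> 0 <= k -> discr a k <= a ^+ 2.
Proof. rewrite /discr => ? ?; nra. Qed.

Lemma sqrt_discr_le : 0 <= a <= 1 -> 0 <= k -> Num.sqrt (discr a k) <= a.
Proof.
move=> /andP[a0 a_le1] k0.
by have := ler_wsqrtr (discr_le_sqr a_le1 k0); rewrite sqrtr_sqr ger0_norm.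
Qed.

Lemma vminus_ge0 : 0 <= k -> 0 <= a <= 1 -> 0 <= vminus a k.
Proof.
move=> k0 a01; have := sqrt_discr_le a01 k0; move: a01 => /andP[? ?] ?.
by rewrite /vminus divr_ge0 //; lra.
Qed.

Lemma vminus_le : 0 < k -> 0 <= a <= 1 -> vminus a k <= 1 - a.
Proof.
move=> k0 /andP[a0 a_le1]; rewrite /vminus ler_pdivrMr; last lra.
set s := Num.sqrt _; have s0 : 0 <= s := sqrtr_ge0 _.
have [D0|D0] := leP (discr a k) 0.
  by rewrite /s ler0_sqrtr //; move: D0; rewrite /discr => ?; nra.
have s2 : s ^+ 2 = discr a k by rewrite sqr_sqrtr // ltW.
have [r0|r0] := leP ((k + 3) * a - (k + 2)) 0; first lra.
(* With r = (k + 3) a - (k + 2): s^2 - r^2 = (k + 4) (1 - a) (r + 1 - a). *)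
have h : 0 <= (k + 4) * ((1 - a) * ((k + 3) * a - (k + 2) + (1 - a))).
  by apply: mulr_ge0; [lra | apply: mulr_ge0; lra].
have : ((k + 3) * a - (k + 2)) ^+ 2 <= s ^+ 2 by rewrite s2 /discr; lra.
rewrite ler_sqr ?nnegrE; lra.
Qed.

Lemma vminus_le_vplus : 0 < k -> vminus a k <= vplus a k.
Proof.
move=> k0; rewrite /vminus /vplus ler_pM2r ?invr_gt0; last lra.
by have := sqrtr_ge0 (discr a k); lra.
Qed.

Lemma dhigh_sub_dlow w : 0 < k ->
  dhigh a k w - dlow a k w = - phi a k w / (k * (1 + k)).
Proof.
by move=> k0; rewrite /dhigh /dlow cap_phi; field; rewrite ?mulf_neq0 ?gt_eqF //; lra.
Qed.

Lemma dhigh_root w : 0 < k -> phi a k w = 0 -> dhigh a k w = w ^+ 2.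
Proof. by move=> k0 phi0; rewrite /dhigh cap_phi phi0; field; rewrite gt_eqF. Qed.

Lemma dlow_root w : 0 < k -> phi a k w = 0 -> dlow a k w = w ^+ 2.
Proof. by move=> k0 phi0; rewrite /dlow cap_phi phi0; field; rewrite gt_eqF //; lra. Qed.

(* The threshold a1 comes from the identity
   k^2 (2 - a)^2 - 16 (a^2 + k a - k) = (k + 4) (k (2 - a)^2 - 4 a^2). *)
Lemma a1_ltE : 0 < k -> 0 < a <= 1 -> 0 <= discr a k ->
  (a1 k < a) = (k * (2 - a) < 4 * Num.sqrt (discr a k)).
Proof.
move=> k0 /andP[a0 a_le1] D0.
set s : R := Num.sqrt _; set t : R := Num.sqrt k.
have s0 : 0 <= s := sqrtr_ge0 _; have t0 : 0 < t by rewrite sqrtr_gt0.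
have s2 : s ^+ 2 = discr a k by rewrite sqr_sqrtr.
have t2 : t ^+ 2 = k by rewrite sqr_sqrtr // ltW.
rewrite /a1 gt_min [1 < a]ltNge a_le1 orbF -/t ltr_pdivrMr; last lra.
transitivity ((t * (2 - a)) ^+ 2 < (2 * a) ^+ 2).
  by rewrite ltr_sqr ?nnegrE; [apply/idP/idP; lra | nra | lra].
transitivity ((k * (2 - a)) ^+ 2 < (4 * s) ^+ 2); last first.
  by rewrite ltr_sqr ?nnegrE; [| nra | lra].
rewrite !exprMn t2 s2 /discr; apply/idP/idP => h; nra.
Qed.

Lemma dminE : 0 < k -> 0 <= discr a k -> dmin a k = vminus a k ^+ 2.
Proof.
move=> k0 D0; rewrite /dmin /vminus expr_div_n [4 + k]addrC.
set s : R := Num.sqrt _; have s2 : s ^+ 2 = discr a k by rewrite sqr_sqrtr.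
by congr (_ / _); move: s2; rewrite /discr => s2; lra.
Qed.

Lemma dmaxE : 0 < k -> 0 < a <= 1 -> 0 <= discr a k ->
  dmax a k = if k * (2 - a) < 4 * Num.sqrt (discr a k) then a ^+ 2 / (4 * k)
             else vplus a k ^+ 2.
Proof.
move=> k0 a01 D0; rewrite /dmax a1_ltE //; case: ifP => // _.
rewrite /vplus expr_div_n [4 + k]addrC.
set s : R := Num.sqrt _; have s2 : s ^+ 2 = discr a k by rewrite sqr_sqrtr.
by congr (_ / _); move: s2; rewrite /discr => s2; lra.
Qed.

Lemma dmin_le_dmax : 0 < k -> 0 < a <= 1 -> 0 <= discr a k -> dmin a k <= dmax a k.
Proof.
move=> k0 a01 D0; rewrite dminE ?dmaxE //.
case: ifP => _; first exact/phi_root_sqr_le/phi_vminus.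
have /andP[a0 a_le1] := a01; have a01' : 0 <= a <= 1 by rewrite ltW.
have v0 := vminus_ge0 (ltW k0) a01'.
by rewrite ler_sqr ?nnegrE ?vminus_le_vplus //; exact: le_trans v0 (vminus_le_vplus k0).
Qed.

Lemma dmax_le_sqr : 0 < k -> 0 < a <= 1 -> 0 <= discr a k -> dmax a k <= a ^+ 2 / (4 * k).
Proof.
move=> k0 a01 D0; rewrite dmaxE //; case: ifP => _ //.
exact/phi_root_sqr_le/phi_vplus.
Qed.

Lemma secant_cap_elim v y d : 0 < k ->
  secant a (1 - 2 * v + y) v < d * (1 + k) -> d * k < cap a (1 - 2 * v + y) ->
  y ^+ 2 - (a - 2 + (k + 4) * v) * y + phi a k v < 0.
Proof.
move=> k0; rewrite secant_shift cap_shift => Hs Hc.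
have k1 : 0 < 1 + k by lra.
nra.
Qed.

(* At the root v = vminus, eliminating d confines y to (-s, 0), where the slope at v
   already exceeds (1 + k) v^2. When discr a k <= 0, vminus is the vertex of phi,
   phi vminus >= 0, and no y is left at all. *)
Lemma vminus_sqr_lt_witness x d : 0 < k -> 0 <= a <= 1 -> 0 < x ->
  (forall v, 0 <= v < 1 - a + x -> secant a x v < d * (1 + k)) ->
  d * k < cap a x -> 0 < discr a k /\ vminus a k ^+ 2 < d.
Proof.
move=> k0 a01 x0 Hsec Hc.
set v := vminus a k; set s : R := Num.sqrt (discr a k).
have s0 : 0 <= s := sqrtr_ge0 _.
have v0 : 0 <= v := vminus_ge0 (ltW k0) a01.
have Hs : secant a x v < d * (1 + k).
  by apply: Hsec; have := vminus_le k0 a01; rewrite -/v; move: a01 => /andP[? ?] ?; lra.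
have xE : x = 1 - 2 * v + (x - (1 - 2 * v)) by ring.
set y := x - _ in xE; rewrite xE in Hs Hc.
have sigma : a - 2 + (k + 4) * v = - s by rewrite /v /vminus -/s; field; lra.
have elim := secant_cap_elim k0 Hs Hc; rewrite sigma in elim.
have phiE : phi a k v = (s ^+ 2 - discr a k) / (k + 4) by rewrite -sqrrN phi_vroot.
have D_gt0 : 0 < discr a k.
  rewrite ltNge; apply/negP => D0.
  have s_eq0 : s = 0 by rewrite /s ler0_sqrtr.
  have : 0 <= phi a k v by rewrite phiE s_eq0 expr0n /= sub0r divr_ge0 //; lra.
  have := sqr_ge0 y; move: elim; rewrite s_eq0; lra.
have phi0 : phi a k v = 0 by rewrite phiE sqr_sqrtr ?subrr ?mul0r // ltW.
rewrite phi0 addr0 in elim; split => //.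
move: Hs; rewrite secant_shift phi0 subr0 => Hs.
have y_neg : - s < y < 0 by apply/andP; split; nra.
have kv : 0 <= k * v by apply: mulr_ge0; lra.
have slope_neg : a - 2 + 3 * v - y < 0 by lra.
have gain : 0 < y * (a - 2 + 3 * v - y) by nra.
have : (1 + k) * v ^+ 2 < (1 + k) * d by lra.
by rewrite ltr_pM2l; lra.
Qed.

(* Here a - 2 + 4 v <= 0, so cap a x - k v^2 = y (a - 2 + 4 v - y) is nonpositive
   both for y > 0, which the slope at v forces when v < 1 - a + x, and for
   y <= a - 2 + 3 v, which is what v >= 1 - a + x means. *)
Lemma witness_lt_vplus_sqr x d : 0 < k -> a <= 1 -> 0 <= discr a k ->
  4 * Num.sqrt (discr a k) <= k * (2 - a) ->
  (forall v, 0 <= v < 1 - a + x -> secant a x v < d * (1 + k)) ->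
  d * k < cap a x -> d < vplus a k ^+ 2.
Proof.
move=> k0 a_le1 D0 hs Hsec Hc.
set v := vplus a k; set s : R := Num.sqrt (discr a k) in hs *.
have s0 : 0 <= s := sqrtr_ge0 _.
have v0 : 0 <= v by rewrite /v /vplus -/s divr_ge0; lra.
have phi0 : phi a k v = 0 by rewrite /v /vplus phi_vroot // sqr_sqrtr // subrr mul0r.
have sigma : a - 2 + (k + 4) * v = s by rewrite /v /vplus -/s; field; lra.
have slope_le0 : a - 2 + 4 * v <= 0.
  have -> : a - 2 + 4 * v = (4 * s - k * (2 - a)) / (k + 4).
    by rewrite /v /vplus -/s; field; lra.
  by apply: mulr_le0_ge0; [lra | rewrite invr_ge0; lra].
have xE : x = 1 - 2 * v + (x - (1 - 2 * v)) by ring.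
set y := x - _ in xE; rewrite xE in Hsec Hc.
have cap_le : (a - 2 + 4 * v) * y - y ^+ 2 <= 0.
  have [vA|Av] := ltP v (1 - a + (1 - 2 * v + y)).
    have Hs : secant a (1 - 2 * v + y) v < d * (1 + k) by apply: Hsec; rewrite v0 vA.
    have := secant_cap_elim k0 Hs Hc; rewrite sigma phi0 addr0 => elim.
    have y_pos : 0 < y by nra.
    nra.
  have : y <= a - 2 + 3 * v by lra.
  nra.
move: Hc; rewrite cap_shift phi0 subr0 => Hc.
have : k * d < k * v ^+ 2 by lra.
by rewrite ltr_pM2l.
Qed.

Lemma witness_between_dmin_dmax x d : 0 < k -> 0 < a <= 1 -> 0 < x ->
  (forall v, 0 <= v < 1 - a + x -> secant a x v < d * (1 + k)) ->
  d * k < cap a x -> 0 < discr a k /\ dmin a k < d < dmax a k.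
Proof.
move=> k0 a01 x0 Hsec Hc; have /andP[a0 a_le1] := a01.
have a01' : 0 <= a <= 1 by rewrite ltW.
have [D0 lo] := vminus_sqr_lt_witness k0 a01' x0 Hsec Hc.
rewrite dminE ?dmaxE ?(ltW D0) // lo /=; split => //.
case: ifP => [_ | /negbT]; last first.
  by rewrite -leNgt => hs; apply: witness_lt_vplus_sqr (ltW D0) hs Hsec Hc.
by have := cap_le_sqr x; rewrite ltr_pdivlMr => *; lra.
Qed.

(* If dlow ws < d fails at a point ws of [vminus, vplus] with d < dhigh ws, solve
   dhigh + dlow = 2 d on [vminus, ws] by the intermediate value theorem; the solution
   lies strictly between vminus and vplus, where phi < 0 separates dlow from dhigh. *)
Lemma exists_dlow_dhigh d : 0 < k -> 0 < a <= 1 -> 0 < discr a k ->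
  vminus a k ^+ 2 < d ->
  d < (if k * (2 - a) < 4 * Num.sqrt (discr a k) then a ^+ 2 / (4 * k)
       else vplus a k ^+ 2) ->
  exists2 w, dlow a k w < d & d < dhigh a k w.
Proof.
move=> k0 a01 D0 lo hi; have /andP[a0 a_le1] := a01.
have [ws /andP[ws_lo ws_hi] d_lt] :
    exists2 ws, vminus a k <= ws <= vplus a k & d < dhigh a k ws.
  move: hi; case: ifP => [hs hi | _ hi]; last first.
    by exists (vplus a k); rewrite ?vminus_le_vplus ?lexx ?dhigh_root ?phi_vplus ?(ltW D0).
  exists ((2 - a) / 4).
    have s0 := sqrtr_ge0 (discr a k).
    have ka : 0 <= k * (2 - a) by apply: mulr_ge0; lra.
    by apply/andP; split; [rewrite /vminus ler_pdivrMr | rewrite /vplus ler_pdivlMr]; lra.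
  rewrite /dhigh ltr_pdivlMr // /cap; move: hi; rewrite ltr_pdivlMr; last lra.
  move=> hi; lra.
have [lt_d|le_d] := ltP (dlow a k ws) d; first by exists ws.
pose G w := dhigh a k w + dlow a k w.
have G_lo : G (vminus a k) < 2 * d.
  by rewrite /G dhigh_root ?dlow_root ?phi_vminus ?(ltW D0) //; lra.
have G_hi : 2 * d < G ws by rewrite /G; lra.
have [c] : exists2 c, c \in `[vminus a k, ws] & G c = 2 * d.
  apply: IVT => //; last first.
    by rewrite ge_min le_max; apply/andP; split; apply/orP; [left | right]; lra.
  apply: continuous_subspaceT => w; rewrite /G /dhigh /dlow /cap.
  by repeat continuity_step; rewrite gt_eqF //; lra.
rewrite in_itv /= => /andP[c_lo c_hi] Gc.
have c_gt : vminus a k < c.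
  by rewrite lt_neqAle c_lo andbT; apply/eqP => ceq; move: Gc; rewrite -ceq; lra.
have c_lt : c < vplus a k.
  apply: lt_le_trans ws_hi; rewrite lt_neqAle c_hi andbT.
  by apply/eqP => ceq; move: Gc; rewrite ceq; lra.
have phi_lt0 : phi a k c < 0.
  rewrite phi_factor ?(ltW D0) // -mulrA pmulr_rlt0; last lra.
  by rewrite pmulr_rlt0 ?subr_gt0 // subr_lt0.
have : 0 < dhigh a k c - dlow a k c.
  by rewrite dhigh_sub_dlow // divr_gt0 ?mulr_gt0 ?oppr_gt0 //; lra.
by exists c; rewrite /G in Gc; lra.
Qed.

Lemma between_dmin_dmax_witness d : 0 < k -> 0 < a <= 1 -> 0 < discr a k ->
  dmin a k < d < dmax a k ->
  exists2 x, 0 < x < a & d * k < cap a x /\ cap a x + (1 - x) ^+ 2 / 4 < d * (1 + k).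
Proof.
move=> k0 a01 D0; rewrite dminE ?dmaxE ?(ltW D0) // => /andP[lo hi].
have d0 : 0 < d by apply: le_lt_trans lo; exact: sqr_ge0.
have [w lo_d d_hi] := exists_dlow_dhigh k0 a01 D0 lo hi.
have dk : d * k < cap a (1 - 2 * w) by rewrite -ltr_pdivlMr.
exists (1 - 2 * w); last split => //.
  have : 0 < cap a (1 - 2 * w) by apply: lt_trans dk; exact: mulr_gt0.
  by rewrite /cap => ?; apply/andP; split; nra.
move: lo_d; rewrite /dlow ltr_pdivrMr; last lra.
by rewrite (_ : (1 - (1 - 2 * w)) ^+ 2 / 4 = w ^+ 2) //; field.
Qed.

End Quadratics.

Section Thresholds.
Variable R : realType.
Implicit Types a k : R.

Lemma discr_astar a k : 0 < k -> discr a k = (a - astar k) * (a + astar k + k).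
Proof.
move=> k0; rewrite /discr /astar; set r : R := Num.sqrt _.
have r2 : r ^+ 2 = 4 * k + k ^+ 2 by rewrite sqr_sqrtr //; nra.
lra.
Qed.

Lemma astar_gt0 k : 0 < k -> 0 < astar k.
Proof.
move=> k0; rewrite /astar; set r : R := Num.sqrt _.
have r2 : r ^+ 2 = 4 * k + k ^+ 2 by rewrite sqr_sqrtr //; nra.
have : k < r by rewrite -(ltr_pXn2r (n := 2)) ?nnegrE ?sqrtr_ge0 //; lra.
by move=> ?; apply: divr_gt0; lra.
Qed.

Lemma astar_lt1 k : 0 < k -> astar k < 1.
Proof.
move=> k0; rewrite /astar; set r : R := Num.sqrt _.
have r2 : r ^+ 2 = 4 * k + k ^+ 2 by rewrite sqr_sqrtr //; nra.
have : r < k + 2 by rewrite -(ltr_pXn2r (n := 2)) ?nnegrE ?sqrtr_ge0 //; lra.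
by move=> ?; rewrite ltr_pdivrMr; lra.
Qed.

Lemma discr_ge0E a k : 0 < k -> 0 <= a -> (0 <= discr a k) = (astar k <= a).
Proof.
move=> k0 a0; have := astar_gt0 k0.
by rewrite discr_astar // => ?; rewrite pmulr_lge0 ?subr_ge0 //; lra.
Qed.

Lemma discr_gt0E a k : 0 < k -> 0 <= a -> (0 < discr a k) = (astar k < a).
Proof.
move=> k0 a0; have := astar_gt0 k0.
by rewrite discr_astar // => ?; rewrite pmulr_lgt0 ?subr_gt0 //; lra.
Qed.

Lemma discr_astar0 k : 0 < k -> discr (astar k) k = 0.
Proof. by move=> k0; rewrite discr_astar // subrr mul0r. Qed.

Lemma dmax_astar k : 0 < k -> dmax (astar k) k = dmin (astar k) k.
Proof.
move=> k0; have a0 := astar_gt0 k0; have a_lt1 := astar_lt1 k0.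
have a01 : 0 < astar k <= 1 by apply/andP; split; lra.
rewrite dmaxE ?dminE ?discr_astar0 // sqrtr0 mulr0 ltNge mulr_ge0 /=; try lra.
by rewrite /vminus /vplus discr_astar0 // sqrtr0 subr0 addr0.
Qed.

Lemma dplusE a k : 0 < k -> 0 < a <= 1 -> dplus a k = a ^+ 2 / (4 * k).
Proof.
move=> k0 /andP[a0 a_le1]; rewrite /dplus.
have valE y : 0 < y -> - g (1 - y) a / (k * y) = cap a (y - 1 + a) / k.
  by move=> y0; rewrite /g /cap; field; rewrite ?mulf_neq0 ?gt_eqF.
set S := [set _ | _ in _].
have ub : ubound S (a ^+ 2 / (4 * k)).
  move=> z [y]; rewrite /= in_itv /= => /andP[y1 y2] <-; rewrite valE; last lra.
  by rewrite invfM mulrA ler_pM2r ?invr_gt0 // cap_le_sqr.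
have mem : S (a ^+ 2 / (4 * k)).
  exists (1 - a / 2); first by rewrite /= in_itv /=; apply/andP; split; lra.
  by rewrite valE /cap; [field; rewrite gt_eqF | lra].
apply/eqP; rewrite eq_le; apply/andP; split.
  by apply: ge_sup => //; exists (a ^+ 2 / (4 * k)).
by apply: ub_le_sup => //; exists (a ^+ 2 / (4 * k)).
Qed.

(* Without the case split of [dmax]; continuity is read off this form. *)
Lemma dmax_capE a k : 0 < k -> astar k <= a <= 1 ->
  dmax a k = cap a (Num.max (1 - 2 * vplus a k) (a / 2)) / k.
Proof.
move=> k0 /andP[ha a_le1]; have a0 : 0 < a by apply: lt_le_trans ha; exact: astar_gt0.
have a01 : 0 < a <= 1 by rewrite a0.
have D0 : 0 <= discr a k by rewrite (discr_ge0E k0 (ltW a0)).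
have xmE : 1 - 2 * vplus a k = (k + 2 * a - 2 * Num.sqrt (discr a k)) / (k + 4).
  by rewrite /vplus; field; rewrite gt_eqF //; lra.
rewrite dmaxE // xmE; case: ifP => hs.
  rewrite max_r; first by rewrite /cap; field; rewrite gt_eqF.
  by rewrite ler_pdivrMr; lra.
move/negbT: hs; rewrite -leNgt => hs.
rewrite max_l; last by rewrite ler_pdivlMr; lra.
by rewrite -xmE (cap_phi _ k) phi_vplus // subr0 mulrC mulKf ?gt_eqF.
Qed.

End Thresholds.

Section Membership.
Variable R : realType.
Implicit Types a k x v d : R.

Definition admissible (f : R -> R -> R) (K A a : R) : set R :=
  [set d | 0 < d /\ forall v, 0 <= v <= A -> d * (K + 1) * (A - v) - f A a >= - f v a].

Lemma ddiamondE f K A a : ddiamond f K A a = inf (admissible f K A a).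
Proof. by []. Qed.

Lemma gtilde_secant a x v :
  gtilde (1 - a + x) (1 - a) - gtilde v (1 - a) = (1 - a + x - v) * secant a x v.
Proof. rewrite /gtilde /g /secant /cap; ring. Qed.

Lemma gtilde_cap a x : 0 < 1 - a + x -> gtilde (1 - a + x) (1 - a) / (1 - a + x) = cap a x.
Proof. by move=> A0; rewrite /gtilde /g /cap; field; rewrite gt_eqF. Qed.

Lemma admissible_gtildeP k a x d :
  admissible (@gtilde R) (1 / k) (1 - a + x) (1 - a) d <->
  0 < d /\ forall v, 0 <= v < 1 - a + x -> secant a x v <= d * (1 / k + 1).
Proof.
split=> -[d0 Hd]; split=> // v /andP[v0 vA].
  have := Hd v; rewrite v0 ltW //= => /(_ isT) H.
  have := gtilde_secant a x v.
  by rewrite -(ler_pM2l (_ : 0 < 1 - a + x - v)); lra.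
have [vA'|vA'] := ltP v (1 - a + x).
  have := Hd v; rewrite v0 vA' => /(_ isT) H; have := gtilde_secant a x v.
  have : (1 - a + x - v) * secant a x v <= (1 - a + x - v) * (d * (1 / k + 1)).
    by rewrite ler_pM2l //; lra.
  lra.
have -> : v = 1 - a + x by lra.
by rewrite subrr mulr0 sub0r.
Qed.

Lemma admissible_max k a x : 0 < k -> 0 < x < a ->
  admissible (@gtilde R) (1 / k) (1 - a + x) (1 - a)
    ((cap a x + (1 - x) ^+ 2 / 4) / (1 / k + 1)).
Proof.
move=> k0 xa; have K0 : 0 < 1 / k + 1 by rewrite addr_gt0 ?divr_gt0.
have cap0 : 0 < cap a x by rewrite /cap; case/andP: xa => ? ?; apply: mulr_gt0; lra.
apply/admissible_gtildeP; split.
  by rewrite divr_gt0 // ltr_wpDr // divr_ge0 ?sqr_ge0.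
by move=> v _; rewrite divfK ?gt_eqF // secant_le.
Qed.

Lemma ddiamond_lt_secant k a x d : 0 < k -> 0 < x < a ->
  ddiamond (@gtilde R) (1 / k) (1 - a + x) (1 - a) < d * k ->
  forall v, 0 <= v < 1 - a + x -> secant a x v < d * (1 + k).
Proof.
move=> k0 xa; rewrite ddiamondE => /inf_lt[]; first by eexists; exact: admissible_max.
move=> d' /admissible_gtildeP[_ Hd'] d'_lt v hv; apply: le_lt_trans (Hd' v hv) _.
have -> : d * (1 + k) = d * k * (1 / k + 1) by field; rewrite gt_eqF.
by rewrite ltr_pM2r // addr_gt0 ?divr_gt0.
Qed.

Lemma ddiamond_lt_of_max k a x d : 0 < k -> 0 < x < a ->
  cap a x + (1 - x) ^+ 2 / 4 < d * (1 + k) ->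
  ddiamond (@gtilde R) (1 / k) (1 - a + x) (1 - a) < d * k.
Proof.
move=> k0 xa hM; rewrite ddiamondE.
apply: le_lt_trans (ge_inf _ (admissible_max k0 xa)) _.
  by exists 0 => z [z0 _]; exact: ltW.
have K0 : 0 < 1 / k + 1 by rewrite addr_gt0 ?divr_gt0.
rewrite ltr_pdivrMr // (_ : d * k * (1 / k + 1) = d * (1 + k)) //.
by field; rewrite gt_eqF.
Qed.

Lemma Dplus_witness k a d : 0 < k -> Dplus k (a, d) ->
  [/\ 0 < a < 1, 0 < d & exists2 x, 0 < x < a &
    d * k < cap a x /\ forall v, 0 <= v < 1 - a + x -> secant a x v < d * (1 + k)].
Proof.
move=> k0 [[/= a01 d0] [_ [A /= [/andP[A_lo A_hi] /andP[Hdd Hup]]]]]; split=> //.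
have /andP[a0 a_lt1] := a01.
have xa : 0 < A - 1 + a < a by apply/andP; split; lra.
have AE : A = 1 - a + (A - 1 + a) by ring.
exists (A - 1 + a) => //; rewrite AE in Hdd Hup; split.
  by rewrite -gtilde_cap; [exact: Hup | lra].
exact: ddiamond_lt_secant.
Qed.

Lemma witness_Dplus k a d x : 0 < k -> 0 < a < 1 -> 0 < d -> 0 < x < a ->
  d * k < cap a x -> cap a x + (1 - x) ^+ 2 / 4 < d * (1 + k) -> Dplus k (a, d).
Proof.
move=> k0 a01 d0 xa dk dM; have /andP[a0 a_lt1] := a01; have /andP[x0 x_lt] := xa.
split; first by split.
split; first by rewrite /Hset /=; split; [apply/andP; split; lra | exact: mulr_gt0].
exists (1 - a + x) => /=; split; first by apply/andP; split; lra.
by rewrite ddiamond_lt_of_max // gtilde_cap //; lra.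
Qed.

Lemma DplusE k : 0 < k ->
  Dplus k = [set p : R * R | Hset p /\ astar k < p.1 /\ dmin p.1 k < p.2 < dmax p.1 k].
Proof.
move=> k0; apply/seteqP; split=> -[a d] /=.
  move=> /(Dplus_witness k0)[a01 d0 [x xa [dk Hsec]]].
  have /andP[a0 a_lt1] := a01; have /andP[x0 _] := xa.
  have a01' : 0 < a <= 1 by rewrite a0 ltW.
  have [D0 dd] := witness_between_dmin_dmax k0 a01' x0 Hsec dk.
  by split; [split | rewrite -(discr_gt0E k0 (ltW a0))].
move=> [[/= a01 d0] [ha dd]]; have /andP[a0 a_lt1] := a01.
have a01' : 0 < a <= 1 by rewrite a0 ltW.
have D0 : 0 < discr a k by rewrite (discr_gt0E k0 (ltW a0)).
have [x xa [dk dM]] := between_dmin_dmax_witness k0 a01' D0 dd.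
exact: witness_Dplus dk dM.
Qed.

End Membership.

Section Continuity.
Variable R : realType.

Lemma dmin_continuous : {within @adom R, continuous (fun p : R * R => dmin p.1 p.2)}.
Proof.
apply: continuous_in_subspaceT => p; rewrite inE => -[k0 _]; rewrite /dmin.
by repeat continuity_step; rewrite gt_eqF // exprn_gt0 //; lra.
Qed.

Lemma dmax_continuous : {within @adom R, continuous (fun p : R * R => dmax p.1 p.2)}.
Proof.
pose F (p : R * R) := cap p.1 (Num.max (1 - 2 * vplus p.1 p.2) (p.1 / 2)) / p.2.
have F_cont : {within @adom R, continuous F}.
  apply: continuous_in_subspaceT => p; rewrite inE => -[k0 _].
  rewrite /F /cap /vplus /discr.
  by repeat continuity_step; rewrite gt_eqF //; lra.
apply: subspace_eq_continuous F_cont => -[a k]; rewrite inE => -[/= k0 ha].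
by rewrite /F /from_subspace /= dmax_capE.
Qed.

End Continuity.

Theorem corollary2p10 (R : realType) :
  {within @adom R, continuous (fun p : R * R => dmin p.1 p.2)} /\
  {within @adom R, continuous (fun p : R * R => dmax p.1 p.2)} /\
  forall k : R, 0 < k ->
    (forall a : R, astar k <= a <= 1 ->
       0 <= dmin a k /\ dmin a k <= dmax a k /\ dmax a k <= dplus a k) /\
    dmax (astar k) k = dmin (astar k) k /\
    Dplus k = [set p : R * R | Hset p /\ astar k < p.1 /\
                               dmin p.1 k < p.2 < dmax p.1 k].
Proof.
split; first exact: dmin_continuous.
split; first exact: dmax_continuous.
move=> k k0; split; last by split; [exact: dmax_astar | exact: DplusE].
move=> a /andP[ha a_le1]; have a0 : 0 < a by apply: lt_le_trans ha; exact: astar_gt0.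
have a01 : 0 < a <= 1 by rewrite a0.
have D0 : 0 <= discr a k by rewrite (discr_ge0E k0 (ltW a0)).
rewrite dplusE //; split; first by rewrite dminE // sqr_ge0.
by split; [exact: dmin_le_dmax | exact: dmax_le_sqr].
Qed.
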